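(* Let $n\geq 3$ and let $C_n$ be the cycle with vertices $v_1,\dots,v_n$, where $v_i\sim v_{(i+1)\bmod n}$. Fix a pair $\{l,j\}\subset\{1,2,3\}$ with $l\neq j$. Then for every 0-cell $\eta\in\mathrm{Hom}(C_n,K_3)$, every vertex $v_i$ of $C_n$ is a return point of exactly one of $\eta$ and $\eta_{\{l,j\}}$. Consequently $r(\eta_{\{l,j\}})=n-r(\eta)$.
   Context: $K_3$ has vertex set $\{1,2,3\}$, viewed as the cycle $C_3$ with $a\sim (a+1)\bmod 3$. A 0-cell of $\mathrm{Hom}(C_n,K_3)$ is a graph homomorphism $\eta:V(C_n)\to\{1,2,3\}$ (adjacent vertices receive distinct values). A vertex $v_i$ is a return point of $\eta$ if $\eta(v_{i+1})-\eta(v_i)\equiv -1 \pmod 3$ (indices of $v$ taken mod $n$); $r(\eta)$, the return number, is the number of return points of $\eta$. For a 0-cell $\eta$ and a pair $\{l,j\}$, the interchanged 0-cell $\eta_{\{l,j\}}$ is defined by $\eta_{\{l,j\}}^{-1}(l)=\eta^{-1}(j)$, $\eta_{\{l,j\}}^{-1}(j)=\eta^{-1}(l)$, and $\eta_{\{l,j\}}^{-1}(i)=\eta^{-1}(i)$ for $i\notin\{l,j\}$. *)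

From mathcomp Require Import all_boot all_order.
Set Implicit Arguments. Unset Strict Implicit. Unset Printing Implicit Defensive.

(* Conventions: vertex v_{i+1} of C_n is the ordinal i : 'I_n, so that
   v_i ~ v_{(i+1) mod n} becomes i ~ ordS i.  Colour a in {1,2,3} of K_3 is the
   ordinal a-1 : 'I_3 (a shift which preserves arithmetic mod 3). *)

Definition cyc_succ (n : nat) (i : 'I_n) : 'I_n := ordS i.

Definition is_hom (n : nat) (eta : 'I_n -> 'I_3) : bool :=
  [forall i : 'I_n, eta i != eta (cyc_succ i)].

(* v_i is a return point: eta(v_{i+1}) - eta(v_i) = -1 (mod 3),
   i.e. eta(v_{i+1}) + 1 = eta(v_i) (mod 3). *)
Definition return_point (n : nat) (eta : 'I_n -> 'I_3) (i : 'I_n) : bool :=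
  (eta (cyc_succ i) + 1) %% 3 == (eta i : nat).

Definition return_number (n : nat) (eta : 'I_n -> 'I_3) : nat :=
  #|[pred i : 'I_n | return_point eta i]|.

Definition is_interchange (n : nat) (l j : 'I_3) (eta eta' : 'I_n -> 'I_3) : Prop :=
  (forall v, (eta' v == l) = (eta v == j)) /\
  (forall v, (eta' v == j) = (eta v == l)) /\
  (forall i v, i != l -> i != j -> (eta' v == i) = (eta v == i)).

(* Swapping two colours l, j of K_3 = Z/3 is the reflection x |-> l + j - x, which
   reverses the orientation of the triangle: an edge a -> b of the cycle that
   steps down (b = a - 1) is mapped to one that steps up, and conversely.  As
   adjacent colours differ, every edge steps either up or down, so each vertex is
   a return point of exactly one of eta and its interchange. *)
From mathcomp Require Import all_boot all_order perm.

Set Implicit Arguments.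
Unset Strict Implicit.
Unset Printing Implicit Defensive.

Definition step_down (a b : 'I_3) : bool := (b + 1) %% 3 == a.

Lemma return_point_step_down (n : nat) (eta : 'I_n -> 'I_3) (i : 'I_n) :
  return_point eta i = step_down (eta i) (eta (cyc_succ i)).
Proof. by []. Qed.

Lemma step_down_xorC (a b : 'I_3) : a != b -> step_down a b (+) step_down b a.
Proof. by case: a b => [[|[|[|//]]] ?] [[|[|[|//]]] ?]. Qed.

Lemma step_down_tperm (l j a b : 'I_3) :
  l != j -> step_down (tperm l j a) (tperm l j b) = step_down b a.
Proof.
by case: l j a b => [[|[|[|//]]] ?] [[|[|[|//]]] ?] [[|[|[|//]]] ?] [[|[|[|//]]] ?];
  rewrite /step_down !permE.
Qed.

Lemma interchange_tperm (n : nat) (l j : 'I_3) (eta eta' : 'I_n -> 'I_3) :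
  is_interchange l j eta eta' -> eta' =1 tperm l j \o eta.
Proof.
case=> eta'_l [eta'_j eta'_other] v /=.
have [eta_l | eta_nl] := eqVneq (eta v) l.
  by rewrite eta_l tpermL; apply/eqP; rewrite eta'_j eta_l.
have [eta_j | eta_nj] := eqVneq (eta v) j.
  by rewrite eta_j tpermR; apply/eqP; rewrite eta'_l eta_j.
by rewrite tpermD 1?eq_sym //; apply/eqP; rewrite eta'_other ?eqxx.
Qed.

Lemma card_xor_predC (T : finType) (P Q : pred T) :
  (forall x, P x (+) Q x) -> #|[pred x | Q x]| = #|T| - #|[pred x | P x]|.
Proof.
move=> PxorQ; rewrite -(cardC [pred x | P x]) addKn.
by apply: eq_card => x; rewrite !inE /=; case: (P x) (Q x) (PxorQ x) => [] [].
Qed.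

Theorem lemma4p6 (n : nat) (hn : 3 <= n) (l j : 'I_3) (hlj : l != j)
    (eta eta' : 'I_n -> 'I_3) (heta : is_hom eta)
    (hint : is_interchange l j eta eta') :
  (forall i : 'I_n, return_point eta i (+) return_point eta' i) /\
  return_number eta' = n - return_number eta.
Proof.
have return_xor (i : 'I_n) : return_point eta i (+) return_point eta' i.
  rewrite !return_point_step_down !(interchange_tperm hint) /= step_down_tperm //.
  by apply: step_down_xorC; move/forallP: heta.
split=> //.
by rewrite /return_number (card_xor_predC return_xor) card_ord.
Qed.
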